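(* Suppose $f:\mathbb{R}_{>0}\to\mathbb{R}_{\ge0}$ is twice differentiable at every $x>0$ with $f''(x)>0$ and $f'(1)=f(1)=0$. If there exist constants $L,U>0$ such that $L\le f''(x)\le U$ for all $x\in[\frac12,\frac32]$, then for every $\zeta\ge1$ and every $x\in(-\frac1{2\zeta},0)\cup(0,\frac1{2\zeta})$, $$\frac{x f'(1+\zeta x)}{f(1+x)}\le\frac{2U}{L}\zeta;$$ that is, $f$ satisfies the condition below with $F(\zeta)=\frac{2U}{L}\zeta$.
   Context: The condition referred to: $f$ is a convex continuous function $(0,\infty)\to[0,\infty)$ with $f(1)=0$, twice differentiable at every $x\ne1$ with $f''(x)\ge0$, $f'(x)<0$ on $(0,1)$ and $f'(x)>0$ on $(1,\infty)$, and there is $F:\mathbb{R}^+\to\mathbb{R}^+$ with $F(\zeta)\le\mathrm{poly}(\zeta)$ such that $\frac{xf'(1+\zeta x)}{f(1+x)}\le F(\zeta)$ for all $\zeta\ge1$ and $x\in(-\frac1{2\zeta},0)\cup(0,\frac1{2\zeta})$. *)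

From Stdlib Require Import Reals.
From Coquelicot Require Import Coquelicot.

(** Since [f'(1) = 0], the mean value theorem gives [y f'(1 + y) <= U y^2],
    and since also [f(1) = 0], Taylor's bound gives [f(1 + x) >= L x^2 / 2].
    For [|x| < 1/(2 zeta)] both [1 + x] and [1 + zeta x] stay in [[1/2, 3/2]];
    taking [y = zeta x] and dividing yields
    [x f'(1 + zeta x) <= U zeta x^2 <= (2 U / L) zeta f(1 + x)]. *)

From Stdlib Require Import Reals Lra.
From Coquelicot Require Import Coquelicot.
Open Scope R_scope.

Lemma segment_within (lo hi a b t : R) :
  lo <= a <= hi -> lo <= b <= hi -> Rmin a b <= t <= Rmax a b -> lo <= t <= hi.
Proof. unfold Rmin, Rmax; destruct Rle_dec; lra. Qed.

Lemma in_segment_l (a b : R) : Rmin a b <= a <= Rmax a b.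
Proof. split; [apply Rmin_l | apply Rmax_l]. Qed.

Lemma MVT_segment (h dh : R -> R) (a b : R) :
  (forall t, Rmin a b <= t <= Rmax a b -> is_derive h t (dh t)) ->
  exists c, Rmin a b <= c <= Rmax a b /\ h b - h a = dh c * (b - a).
Proof.
  intros Hh; apply MVT_gen.
  - intros t Ht; apply Hh; lra.
  - intros t Ht; apply continuity_pt_filterlim, (ex_derive_continuous h).
    exists (dh t); now apply Hh.
Qed.

Lemma increment_mul_le (g dg : R -> R) (a b M : R) :
  (forall t, Rmin a b <= t <= Rmax a b -> is_derive g t (dg t)) ->
  (forall t, Rmin a b <= t <= Rmax a b -> dg t <= M) ->
  (b - a) * (g b - g a) <= M * (b - a) ^ 2.
Proof.
  intros Hg HM.
  destruct (MVT_segment g dg a b Hg) as [c [Hc Ec]]; rewrite Ec.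
  specialize (HM c Hc).
  assert (0 <= (M - dg c) * (b - a) ^ 2) by (apply Rmult_le_pos; [lra | apply pow2_ge_0]).
  nra.
Qed.

Lemma second_order_nonneg (h dh d2h : R -> R) (a b : R) :
  (forall t, Rmin a b <= t <= Rmax a b -> is_derive h t (dh t)) ->
  (forall t, Rmin a b <= t <= Rmax a b -> is_derive dh t (d2h t)) ->
  (forall t, Rmin a b <= t <= Rmax a b -> 0 <= d2h t) ->
  h a = 0 -> dh a = 0 -> 0 <= h b.
Proof.
  intros Hh Hdh Hd2h Ha Hda.
  destruct (MVT_segment h dh a b Hh) as [c [Hc Ec]].
  assert (Hsub : forall t, Rmin a c <= t <= Rmax a c -> Rmin a b <= t <= Rmax a b)
    by (intro t; apply segment_within; [apply in_segment_l | exact Hc]).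
  destruct (MVT_segment dh d2h a c (fun t Ht => Hdh t (Hsub t Ht))) as [d [Hd Ed]].
  assert (Hsign : 0 <= (c - a) * (b - a))
    by (unfold Rmin, Rmax in Hc; destruct Rle_dec; nra).
  assert (Hb : h b = d2h d * ((c - a) * (b - a))) by nra.
  rewrite Hb; apply Rmult_le_pos; [apply Hd2h, Hsub, Hd | exact Hsign].
Qed.

Lemma taylor2_lower_bound (f f1 f2 : R -> R) (a b m : R) :
  (forall t, Rmin a b <= t <= Rmax a b -> is_derive f t (f1 t)) ->
  (forall t, Rmin a b <= t <= Rmax a b -> is_derive f1 t (f2 t)) ->
  (forall t, Rmin a b <= t <= Rmax a b -> m <= f2 t) ->
  f a + f1 a * (b - a) + m / 2 * (b - a) ^ 2 <= f b.
Proof.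
  intros Hf Hf1 Hm.
  pose (p t := f a + f1 a * (t - a) + m / 2 * (t - a) ^ 2).
  pose (dp t := f1 a + m * (t - a)).
  assert (Hp : forall t, is_derive p t (dp t))
    by (intro t; unfold p, dp; auto_derive; [easy | field]).
  assert (Hdp : forall t, is_derive dp t m)
    by (intro t; unfold dp; auto_derive; [easy | field]).
  enough (0 <= f b - p b) by (unfold p in *; lra).
  apply (second_order_nonneg (fun t => f t - p t) (fun t => f1 t - dp t)
           (fun t => f2 t - m) a b).
  - intros t Ht; exact (is_derive_minus _ _ _ _ _ (Hf t Ht) (Hp t)).
  - intros t Ht; exact (is_derive_minus _ _ _ _ _ (Hf1 t Ht) (Hdp t)).
  - intros t Ht; specialize (Hm t Ht); lra.
  - unfold p; ring.
  - unfold dp; ring.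
Qed.

Theorem lemma6p1 (f f1 f2 : R -> R) (L U : R) :
  (forall x, 0 < x -> 0 <= f x) ->
  (forall x, 0 < x -> is_derive f x (f1 x)) ->
  (forall x, 0 < x -> is_derive f1 x (f2 x)) ->
  (forall x, 0 < x -> 0 < f2 x) ->
  f1 1 = 0 -> f 1 = 0 ->
  0 < L -> 0 < U ->
  (forall x, 1/2 <= x <= 3/2 -> L <= f2 x <= U) ->
  forall zeta x, 1 <= zeta ->
    ((- (1 / (2 * zeta)) < x < 0) \/ (0 < x < 1 / (2 * zeta))) ->
    x * f1 (1 + zeta * x) / f (1 + x) <= (2 * U / L) * zeta.
Proof.
  intros _ Hf Hf1 _ Hf1_1 Hf_1 HL HU Hbounds zeta x Hzeta Hx.
  assert (Hhalf : zeta * (1 / (2 * zeta)) = 1 / 2) by (field; lra).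
  assert (Hrange : 1/2 <= 1 + zeta * x <= 3/2 /\ 1/2 <= 1 + x <= 3/2 /\ 0 < x * x)
    by (destruct Hx; nra).
  destruct Hrange as [Hzx [Hx1 Hxx]].
  assert (Hseg : forall b t, 1/2 <= b <= 3/2 -> Rmin 1 b <= t <= Rmax 1 b -> 1/2 <= t <= 3/2)
    by (intros b t; apply segment_within; lra).
  assert (Hnum : (1 + zeta * x - 1) * (f1 (1 + zeta * x) - f1 1)
                 <= U * (1 + zeta * x - 1) ^ 2).
  { apply (increment_mul_le f1 f2); intros t Ht; specialize (Hseg _ t Hzx Ht).
    - apply Hf1; lra.
    - apply Hbounds, Hseg. }
  assert (Hden : f 1 + f1 1 * (1 + x - 1) + L / 2 * (1 + x - 1) ^ 2 <= f (1 + x)).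
  { apply (taylor2_lower_bound f f1 f2); intros t Ht; specialize (Hseg _ t Hx1 Ht).
    - apply Hf; lra.
    - apply Hf1; lra.
    - apply Hbounds, Hseg. }
  rewrite Hf1_1 in Hnum; rewrite Hf_1, Hf1_1 in Hden.
  replace (1 + zeta * x - 1) with (zeta * x) in Hnum by ring.
  replace (1 + x - 1) with x in Hden by ring.
  rewrite Rminus_0_r in Hnum; rewrite Rmult_0_l, !Rplus_0_l in Hden.
  apply Rle_div_l; [nra |].
  apply (Rle_trans _ (2 * U / L * zeta * (L / 2 * x ^ 2))).
  - replace (2 * U / L * zeta * (L / 2 * x ^ 2)) with (U * zeta * x ^ 2) by (field; lra).
    nra.
  - apply Rmult_le_compat_l; [| exact Hden].
    apply Rmult_le_pos; [apply Rlt_le, Rdiv_lt_0_compat |]; lra.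
Qed.
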